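(* Let $\lambda\geqslant1$ be a cardinal, $n$ a positive integer, and $\tau$ any (Hausdorff) inverse semigroup topology on $\mathscr{I}_\lambda^n$ (i.e. a topology making multiplication and inversion continuous). Then $(\mathscr{I}_\lambda^n,\tau)$ is absolutely $H$-closed in the class of topological inverse semigroups; that is, for every topological inverse semigroup $T$ and every continuous homomorphism $h\colon(\mathscr{I}_\lambda^n,\tau)\to T$, the image $(\mathscr{I}_\lambda^n)h$ is closed in every topological inverse semigroup containing it as a subsemigroup.
   Context: All topological spaces are Hausdorff. A topological inverse semigroup is an inverse semigroup with a topology making multiplication and inversion continuous. For a set $X$ of cardinality $\lambda$, $\mathscr{I}(X)$ is the semigroup of all partial one-to-one maps of $X$ (including the empty map) under composition; the rank of $\alpha$ is $|\operatorname{ran}\alpha|$, and $\mathscr{I}_\lambda^n=\{\alpha\in\mathscr{I}(X):\operatorname{rank}\alpha\leqslant n\}$. Given a class $\mathfrak{S}$ of topological semigroups, $S\in\mathfrak{S}$ is $H$-closed in $\mathfrak{S}$ if it is closed in every $T\in\mathfrak{S}$ containing $S$ as a subsemigroup, and absolutely $H$-closed in $\mathfrak{S}$ if every continuous homomorphic image of $S$ in any member of $\mathfrak{S}$ is $H$-closed in $\mathfrak{S}$. *)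

From Stdlib Require Import List Arith Lia ClassicalEpsilon.
Set Implicit Arguments.

Record topology (X : Type) := Topology {
  open : (X -> Prop) -> Prop;
  open_full : open (fun _ => True);
  open_inter : forall U V, open U -> open V -> open (fun x => U x /\ V x);
  open_union : forall F : (X -> Prop) -> Prop,
      (forall U, F U -> open U) -> open (fun x => exists U, F U /\ U x)
}.
Arguments open {X} t U.

Definition closed {X : Type} (t : topology X) (A : X -> Prop) : Prop :=
  open t (fun x => ~ A x).

Definition hausdorff {X : Type} (t : topology X) : Prop :=
  forall x y, x <> y -> exists U V, open t U /\ open t V /\ U x /\ V y /\
    (forall z, ~ (U z /\ V z)).

Definition continuous {X Y : Type} (tX : topology X) (tY : topology Y)
  (f : X -> Y) : Prop :=
  forall V, open tY V -> open tX (fun x => V (f x)).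

(** continuity of a binary map X * X -> X for the product topology
    (checked on basic open rectangles) *)
Definition continuous2 {X : Type} (t : topology X) (m : X -> X -> X) : Prop :=
  forall x y W, open t W -> W (m x y) ->
    exists U V, open t U /\ open t V /\ U x /\ V y /\
      (forall a b, U a -> V b -> W (m a b)).

Definition inverse_semigroup {S : Type} (m : S -> S -> S) (i : S -> S) : Prop :=
  (forall x y z, m x (m y z) = m (m x y) z) /\
  (forall x, m (m x (i x)) x = x /\ m (m (i x) x) (i x) = i x) /\
  (forall x y, m (m x y) x = x -> m (m y x) y = y -> y = i x).

Definition top_inverse_semigroup {S : Type} (m : S -> S -> S) (i : S -> S)
  (t : topology S) : Prop :=
  inverse_semigroup m i /\ hausdorff t /\ continuous2 t m /\ continuous t t i.

Record TIS := MkTIS {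
  tcar :> Type;
  tmul : tcar -> tcar -> tcar;
  tinv : tcar -> tcar;
  ttop : topology tcar;
  tax : top_inverse_semigroup tmul tinv ttop
}.

(** [A] (a subset of [T], which is an inverse subsemigroup of [T] carrying
    the subspace topology) is H-closed in the class of topological inverse
    semigroups: whenever [e] embeds [A] into a topological inverse semigroup
    [T'] as a (topological) subsemigroup, the image [e(A)] is closed in [T']. *)
Definition subsemigroup_embedding (T T' : TIS) (A : T -> Prop) (e : T -> T')
  : Prop :=
  (forall a b, A a -> A b -> e (tmul T a b) = tmul T' (e a) (e b)) /\
  (forall a b, A a -> A b -> e a = e b -> a = b) /\
  (* continuity of e restricted to A (subspace topology on A) *)
  (forall V, open (ttop T') V -> exists U, open (ttop T) U /\
        forall a, A a -> (U a <-> V (e a))) /\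
  (* e is open onto its image (subspace topology on e(A)) *)
  (forall U, open (ttop T) U -> exists V, open (ttop T') V /\
        forall a, A a -> (U a <-> V (e a))).

Definition H_closed_subset (T : TIS) (A : T -> Prop) : Prop :=
  forall (T' : TIS) (e : T -> T'), @subsemigroup_embedding T T' A e ->
    closed (ttop T') (fun y => exists a, A a /\ e a = y).

Definition abs_H_closed {S : Type} (m : S -> S -> S) (tau : topology S) : Prop :=
  forall (T : TIS) (h : S -> T),
    continuous tau (ttop T) h ->
    (forall a b, h (m a b) = tmul T (h a) (h b)) ->
    H_closed_subset T (fun t => exists a, h a = t).

(** a partial one-to-one map of X is encoded by its graph *)
Definition pbij {X : Type} (R : X -> X -> Prop) : Prop :=
  (forall x y y', R x y -> R x y' -> y = y') /\
  (forall x x' y, R x y -> R x' y -> x = x').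

Definition rank_le {X : Type} (R : X -> X -> Prop) (n : nat) : Prop :=
  exists l : list X, length l <= n /\ forall x y, R x y -> In y l.

Definition SIS (X : Type) (n : nat) : Type :=
  { R : X -> X -> Prop | pbij R /\ rank_le R n }.

(** composition, written left to right: x (a b) = (x a) b *)
Definition rcomp {X : Type} (R S : X -> X -> Prop) : X -> X -> Prop :=
  fun x z => exists y, R x y /\ S y z.

Lemma rcomp_ok (X : Type) (n : nat) (R S : X -> X -> Prop) :
  pbij R /\ rank_le R n -> pbij S /\ rank_le S n ->
  pbij (rcomp R S) /\ rank_le (rcomp R S) n.
Proof.
  intros [[fR iR] _] [[fS iS] [l [Hl Hin]]]; split; [split|].
  - intros x z z' [y [H1 H2]] [y' [H1' H2']].
    rewrite (fR _ _ _ H1 H1') in H2. eauto.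
  - intros x x' z [y [H1 H2]] [y' [H1' H2']].
    rewrite (iS _ _ _ H2 H2') in H1. eauto.
  - exists l; split; [exact Hl|]. intros x z [y [_ H]]; eauto.
Qed.

Lemma rinv_ok (X : Type) (n : nat) (R : X -> X -> Prop) :
  pbij R /\ rank_le R n ->
  pbij (fun x y => R y x) /\ rank_le (fun x y => R y x) n.
Proof.
  intros [[fR iR] [l [Hl Hin]]]; split; [split|].
  - intros x y y' H1 H2; eauto.
  - intros x x' y H1 H2; eauto.
  - exists (map (fun y => epsilon (inhabits y) (fun x => R x y)) l).
    rewrite length_map; split; [exact Hl|].
    intros y x H. apply in_map_iff. exists y; split; [|exact (Hin _ _ H)].
    apply (iR _ _ y); [|exact H].
    apply (epsilon_spec (inhabits y) (fun z => R z y)). eauto.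
Qed.

Definition SIS_mul {X : Type} {n : nat} (a b : SIS X n) : SIS X n :=
  exist _ (rcomp (proj1_sig a) (proj1_sig b))
    (rcomp_ok (proj2_sig a) (proj2_sig b)).

Definition SIS_inv {X : Type} {n : nat} (a : SIS X n) : SIS X n :=
  exist _ (fun x y => proj1_sig a y x) (rinv_ok (proj2_sig a)).

From Stdlib Require Import List Lia Classical ClassicalEpsilon.
From Stdlib Require Import FunctionalExtensionality PropExtensionality ProofIrrelevance.
Import ListNotations.

(** Idempotents of [I_lambda^n] are partial identities of finite support, so for an
    idempotent [e = g d] the set [g(I) e] is finite.  Hence an idempotent [y] adherent
    to the set [E] of idempotents of the range satisfies [y E ⊆ E]; as strictly
    increasing chains of partial identities raise the rank, which is at most [n],
    [y E] has a maximal element [k], and continuity of [z |-> k z] at [y] (where the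
    value [k z] is confined to a finite set) forces [k = y].  For [x] adherent to the
    range, [x x^-1] and [x^-1 x] are therefore values [g d1], [g d2], and [x] is fixed
    by the continuous map [z |-> x x^-1 z x^-1 x], which sends the range into the
    finite set [g (d1 I d2)]; a point adherent to a finite subset of a Hausdorff
    space lies in it. *)

Section Adherence.
Variables (Y : Type) (t : topology Y).

Definition adherent (P : Y -> Prop) (x : Y) : Prop :=
  forall U, open t U -> U x -> exists z, U z /\ P z.

Definition continuous_at (f : Y -> Y) (x : Y) : Prop :=
  forall W, open t W -> W (f x) -> exists V, open t V /\ V x /\ forall z, V z -> W (f z).

Lemma closed_of_adherent P : (forall x, adherent P x -> P x) -> closed t P.
Proof.
  intros HP. unfold closed.
  assert (E : (fun x => ~ P x) =
              (fun x => exists U, (open t U /\ forall z, U z -> ~ P z) /\ U x)).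
  { apply functional_extensionality; intro x; apply propositional_extensionality; split.
    - intros Nx. apply NNPP; intro Hn. apply Nx, HP. intros U HU Ux.
      apply NNPP; intro Hn'. apply Hn. exists U.
      split; [split; [exact HU|] | exact Ux]. intros z Uz Pz. eauto.
    - intros [U [[_ HU] Ux]]. exact (HU x Ux). }
  rewrite E. apply open_union. intros U [HU _]. exact HU.
Qed.

Lemma adherent_image (f : Y -> Y) (P Q : Y -> Prop) x :
  (forall z, P z -> Q (f z)) -> continuous_at f x -> adherent P x -> adherent Q (f x).
Proof.
  intros HPQ Hf HP U HU Ufx. destruct (Hf U HU Ufx) as [V [HV [Vx HVU]]].
  destruct (HP V HV Vx) as [z [Vz Pz]]. eauto.
Qed.

Lemma continuous_at_comp (f g : Y -> Y) x :
  continuous_at g x -> continuous_at f (g x) -> continuous_at (fun z => f (g z)) x.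
Proof.
  intros Hg Hf W HW Wx. destruct (Hf W HW Wx) as [V [HV [Vgx HVW]]].
  destruct (Hg V HV Vgx) as [V' [HV' [V'x HV'V]]].
  exists V'. repeat split; auto.
Qed.

Hypothesis t_hausdorff : hausdorff t.

Lemma hausdorff_isolate (l : list Y) x :
  exists U, open t U /\ U x /\ forall z, In z l -> U z -> z = x.
Proof.
  induction l as [|a l [U [HU [Ux HUl]]]].
  - exists (fun _ => True). repeat split; [apply open_full | intros z []].
  - destruct (classic (a = x)) as [<-|Nax].
    + exists U. repeat split; [exact HU | exact Ux|]. intros z [<-|Hz]; auto.
    + destruct (t_hausdorff x a (fun E => Nax (eq_sym E)))
        as [V [V' [HV [HV' [Vx [V'a HVV']]]]]].
      exists (fun z => U z /\ V z). repeat split; [apply open_inter; assumption | assumption.. |].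
      intros z [<-|Hz] [Uz Vz]; [destruct (HVV' a (conj Vz V'a)) | exact (HUl z Hz Uz)].
Qed.

Lemma adherent_finite (P : Y -> Prop) (l : list Y) x :
  adherent (fun z => P z /\ In z l) x -> P x.
Proof.
  intros Hx. destruct (hausdorff_isolate l x) as [U [HU [Ux HUl]]].
  destruct (Hx U HU Ux) as [z [Uz [Pz Hz]]]. rewrite <- (HUl z Hz Uz). exact Pz.
Qed.

End Adherence.
Arguments adherent {Y}.
Arguments continuous_at {Y}.
Arguments closed_of_adherent {Y}.
Arguments adherent_image {Y}.
Arguments continuous_at_comp {Y}.
Arguments adherent_finite {Y}.
Arguments hausdorff_isolate {Y}.

Lemma ex_maximal_of_rank_bound {A : Type} (K : A -> Prop) (lt : A -> A -> Prop)
    (rk : nat -> A -> Prop) (N : nat) :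
  (exists k, K k) -> (forall k, K k -> rk N k) ->
  (forall k k' r, K k -> K k' -> lt k k' -> rk r k' -> exists r', r' < r /\ rk r' k) ->
  exists k, K k /\ forall k', K k' -> ~ lt k k'.
Proof.
  intros [k0 Hk0] HN Hdown. apply NNPP; intro Hnomax.
  assert (Hup : forall k, K k -> exists k', K k' /\ lt k k').
  { intros k Hk. apply NNPP; intro Hn. apply Hnomax. exists k. split; [exact Hk|].
    intros k' Hk' Hlt. apply Hn. eauto. }
  assert (Hchain : forall j, exists k, K k /\ forall r, rk r k -> j <= r).
  { induction j as [|j [k [Hk Hj]]].
    - exists k0. split; [exact Hk0 | intros; lia].
    - destruct (Hup k Hk) as [k' [Hk' Hlt]]. exists k'. split; [exact Hk'|].
      intros r Hr. destruct (Hdown k k' r Hk Hk' Hlt Hr) as [r' [Hr' Hrk]].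
      specialize (Hj r' Hrk). lia. }
  destruct (Hchain (S N)) as [k [Hk Hj]]. specialize (Hj N (HN k Hk)). lia.
Qed.

Section InverseSemigroup.
Variables (S : Type) (m : S -> S -> S) (i : S -> S).
Hypothesis Hinv : inverse_semigroup m i.

Lemma mulA x y z : m x (m y z) = m (m x y) z.
Proof. exact (proj1 Hinv x y z). Qed.

Lemma mul_inv_mul x : m (m x (i x)) x = x.
Proof. exact (proj1 (proj1 (proj2 Hinv) x)). Qed.

Lemma inv_mul_inv x : m (m (i x) x) (i x) = i x.
Proof. exact (proj2 (proj1 (proj2 Hinv) x)). Qed.

Lemma inv_unique x y : m (m x y) x = x -> m (m y x) y = y -> y = i x.
Proof. exact (proj2 (proj2 Hinv) x y). Qed.

Lemma invK x : i (i x) = x.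
Proof. symmetry. apply inv_unique; [apply inv_mul_inv | apply mul_inv_mul]. Qed.

Lemma inv_idem e : m e e = e -> i e = e.
Proof. intros He. symmetry. apply inv_unique; rewrite !He; reflexivity. Qed.

Lemma mul_idem_r x e : m e e = e -> m (m x e) e = m x e.
Proof. intros He. rewrite <- mulA, He. reflexivity. Qed.

Lemma mul_idem e f : m e e = e -> m f f = f -> m (m e f) (m e f) = m e f.
Proof.
  intros He Hf. set (b := i (m e f)).
  (* [f b e] is an inverse of [e f], hence equals [b]; this makes [b] idempotent. *)
  assert (Hb : m (m f b) e = b).
  { apply inv_unique.
    - rewrite !mulA, !(mul_idem_r _ _ Hf), !(mul_idem_r _ _ He), <- (mulA _ e f).
      apply mul_inv_mul.
    - rewrite !mulA, !(mul_idem_r _ _ Hf), !(mul_idem_r _ _ He), <- (mulA _ e f).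
      rewrite <- (mulA f b (m e f)), <- (mulA f (m b (m e f)) b).
      unfold b. rewrite inv_mul_inv. reflexivity. }
  assert (Hbb : m b b = b).
  { rewrite <- Hb at 1 2. rewrite !mulA, <- (mulA _ e f).
    rewrite <- (mulA f b (m e f)), <- (mulA f (m b (m e f)) b).
    unfold b. rewrite inv_mul_inv. exact Hb. }
  assert (Hef : m e f = b) by (rewrite <- (inv_idem b Hbb); symmetry; apply invK).
  rewrite Hef. exact Hbb.
Qed.

Lemma idem_comm e f : m e e = e -> m f f = f -> m e f = m f e.
Proof.
  intros He Hf.
  rewrite <- (inv_idem _ (mul_idem f e Hf He)). apply inv_unique.
  - rewrite !mulA, !(mul_idem_r _ _ Hf), !(mul_idem_r _ _ He), <- (mulA _ f e).
    apply mul_idem; assumption.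
  - rewrite !mulA, !(mul_idem_r _ _ Hf), !(mul_idem_r _ _ He), <- (mulA _ e f).
    apply mul_idem; assumption.
Qed.

Lemma idem_sandwich_l e z : m e e = e -> m z z = z -> m (m e z) e = m z e.
Proof. intros He Hz. rewrite (idem_comm e z He Hz), <- mulA, He. reflexivity. Qed.

Lemma idem_sandwich_r e z : m e e = e -> m z z = z -> m (m e z) e = m e z.
Proof. intros He Hz. rewrite <- mulA, (idem_comm z e Hz He), mulA, He. reflexivity. Qed.

End InverseSemigroup.
Arguments mulA {S m i}.
Arguments mul_inv_mul {S m i}.
Arguments inv_unique {S m i}.
Arguments invK {S m i}.
Arguments idem_comm {S m i}.
Arguments idem_sandwich_l {S m i}.
Arguments idem_sandwich_r {S m i}.

Fixpoint sublists {A : Type} (l : list A) : list (list A) :=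
  match l with
  | [] => [[]]
  | a :: l' => sublists l' ++ map (cons a) (sublists l')
  end.

Lemma sublists_spec {A : Type} (L : list A) (R : A -> Prop) :
  (forall p, R p -> In p L) -> exists P, In P (sublists L) /\ forall p, R p <-> In p P.
Proof.
  revert R; induction L as [|a L IH]; intros R HR.
  - exists []. split; [left; reflexivity|]. intros p; split; [exact (HR p) | intros []].
  - destruct (classic (R a)) as [Ra|Na].
    + destruct (IH (fun p => R p /\ p <> a)) as [P [HP HRP]].
      { intros p [Rp Npa]. destruct (HR p Rp) as [<-|Hp]; [contradiction | exact Hp]. }
      exists (a :: P). split; [apply in_or_app; right; apply in_map; exact HP|].
      intros p. split.
      * intros Rp. destruct (classic (p = a)) as [->|Npa]; [left|right; apply HRP]; auto.
      * intros [<-|Hp]; [exact Ra | apply HRP in Hp; tauto].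
    + destruct (IH R) as [P [HP HRP]].
      { intros p Rp. destruct (HR p Rp) as [<-|Hp]; [contradiction | exact Hp]. }
      exists P. split; [apply in_or_app; left; exact HP | exact HRP].
Qed.

Section PartialBijections.
Variables (X : Type) (n : nat).
Implicit Types s u d : SIS X n.

Lemma SIS_ext s s' : (forall x y, proj1_sig s x y <-> proj1_sig s' x y) -> s = s'.
Proof.
  destruct s as [R HR], s' as [R' HR']; simpl; intros HRR'.
  assert (E : R = R').
  { do 2 (apply functional_extensionality; intro).
    apply propositional_extensionality, HRR'. }
  subst R'. f_equal. apply proof_irrelevance.
Qed.

Lemma SIS_mul_inv_mul s : SIS_mul (SIS_mul s (SIS_inv s)) s = s.
Proof.
  destruct s as [R [[funR injR] rkR]]. apply SIS_ext; simpl; unfold rcomp. intros x z. split.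
  - intros [y [[w [Hxw Hyw]] Hyz]]. rewrite (injR _ _ _ Hxw Hyw). exact Hyz.
  - intros Hxz. exists x. split; [exists z|]; auto.
Qed.

Lemma SIS_inv_mul_inv s : SIS_mul (SIS_mul (SIS_inv s) s) (SIS_inv s) = SIS_inv s.
Proof.
  destruct s as [R [[funR injR] rkR]]. apply SIS_ext; simpl; unfold rcomp. intros x z. split.
  - intros [y [[w [Hwx Hwy]] Hzy]]. rewrite (funR _ _ _ Hwx Hwy). exact Hzy.
  - intros Hzx. exists x. split; [exists z|]; auto.
Qed.

(* The idempotents of [SIS X n] are the partial identities. *)
Definition pid d : Prop := forall a b, proj1_sig d a b -> a = b.

Lemma pid_mul_inv s : pid (SIS_mul s (SIS_inv s)).
Proof.
  intros a b [c [Hac Hbc]]. exact (proj2 (proj1 (proj2_sig s)) _ _ _ Hac Hbc).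
Qed.

Lemma pid_mul u d : pid u -> pid d -> pid (SIS_mul u d).
Proof. intros Hu Hd a b [c [Hac Hcb]]. rewrite (Hu _ _ Hac). exact (Hd _ _ Hcb). Qed.

Lemma pid_idem d : pid d -> SIS_mul d d = d.
Proof.
  intros Hd. apply SIS_ext; simpl; unfold rcomp. intros a b. split.
  - intros [c [Hac Hcb]]. rewrite (Hd _ _ Hac). exact Hcb.
  - intros Hab. exists b. split; [exact Hab|]. rewrite (Hd _ _ Hab) in Hab. exact Hab.
Qed.

Lemma pid_mul_rank_lt d d' r : pid d -> pid d' -> SIS_mul d d' <> d' ->
  rank_le (proj1_sig d') r -> exists r', r' < r /\ rank_le (proj1_sig (SIS_mul d d')) r'.
Proof.
  intros Hd Hd' Ne [l [Hl Hin]].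
  assert (Sub : forall a b, proj1_sig (SIS_mul d d') a b -> proj1_sig d' a b).
  { intros a b [c [Hac Hcb]]. rewrite (Hd _ _ Hac). exact Hcb. }
  assert (Hlost : exists a b, proj1_sig d' a b /\ ~ proj1_sig (SIS_mul d d') a b).
  { apply NNPP; intro Hn. apply Ne, SIS_ext. intros a b. split; [apply Sub|].
    intros Hab. apply NNPP; intro Nab. apply Hn. eauto. }
  destruct Hlost as [a [b [Hab Nab]]].
  set (dec := fun x y : X => excluded_middle_informative (x = y)).
  exists (length (remove dec b l)). split.
  { pose proof (remove_length_lt dec l b (Hin _ _ Hab)). lia. }
  exists (remove dec b l). split; [reflexivity|]. intros a' b' Ha'b'.
  apply in_in_remove; [|exact (Hin _ _ (Sub _ _ Ha'b'))].
  intros ->. apply Nab.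
  pose proof (Hd' _ _ Hab) as Eab. pose proof (Hd' _ _ (Sub _ _ Ha'b')) as Ea'b.
  subst. exact Ha'b'.
Qed.

Definition within (L : list (X * X)) s : Prop :=
  forall a b, proj1_sig s a b -> In (a, b) L.

Lemma within_sandwich d1 d2 : pid d1 -> pid d2 ->
  exists L, forall s, within L (SIS_mul (SIS_mul d1 s) d2).
Proof.
  intros Hd1 Hd2. destruct (proj2 (proj2_sig d1)) as [l1 [_ Hl1]].
  destruct (proj2 (proj2_sig d2)) as [l2 [_ Hl2]].
  exists (list_prod l1 l2). intros s a b [c [[a' [Haa' _]] Hcb]]. apply in_prod.
  - rewrite (Hd1 _ _ Haa') at 1. exact (Hl1 _ _ Haa').
  - exact (Hl2 _ _ Hcb).
Qed.

Lemma within_finite L : exists ls, forall s, within L s -> In s ls.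
Proof.
  destruct (classic (inhabited (SIS X n))) as [Hne|Hempty];
    [|exists []; intros s; destruct (Hempty (inhabits s))].
  set (graph := fun (P : list (X * X)) s => forall a b, proj1_sig s a b <-> In (a, b) P).
  exists (map (fun P => epsilon Hne (graph P)) (sublists L)). intros s Hs.
  destruct (sublists_spec L (fun p => proj1_sig s (fst p) (snd p))) as [P [HP HsP]].
  { intros [a b]. apply Hs. }
  assert (Hgraph : graph P (epsilon Hne (graph P))).
  { apply epsilon_spec. exists s. intros a b. exact (HsP (a, b)). }
  assert (Es : epsilon Hne (graph P) = s).
  { apply SIS_ext. intros a b. rewrite (Hgraph a b). symmetry. exact (HsP (a, b)). }
  rewrite <- Es. exact (in_map (fun P => epsilon Hne (graph P)) _ _ HP).
Qed.

End PartialBijections.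
Arguments pid {X n}.

Section TopologicalInverseSemigroup.
Variable T : TIS.
Local Notation m := (tmul T).
Local Notation i := (tinv T).
Local Notation tt := (ttop T).

Lemma TIS_inverse : inverse_semigroup m i.
Proof. exact (proj1 (tax T)). Qed.

Lemma TIS_hausdorff : hausdorff tt.
Proof. exact (proj1 (proj2 (tax T))). Qed.

Lemma continuous_at_mull a x : continuous_at tt (m a) x.
Proof.
  intros W HW Wax. destruct (proj1 (proj2 (proj2 (tax T))) a x W HW Wax)
    as [U [V [_ [HV [Ua [Vx HUV]]]]]].
  exists V. auto.
Qed.

Lemma continuous_at_mulr a x : continuous_at tt (fun z => m z a) x.
Proof.
  intros W HW Wxa. destruct (proj1 (proj2 (proj2 (tax T))) x a W HW Wxa)
    as [U [V [HU [_ [Ux [Va HUV]]]]]].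
  exists U. auto.
Qed.

Lemma continuous_at_inv x : continuous_at tt i x.
Proof.
  intros W HW Wix. exists (fun z => W (i z)).
  repeat split; auto. exact (proj2 (proj2 (proj2 (tax T))) W HW).
Qed.

Lemma continuous_at_mul_inv x : continuous_at tt (fun z => m z (i z)) x.
Proof.
  intros W HW Wx. destruct (proj1 (proj2 (proj2 (tax T))) x (i x) W HW Wx)
    as [U [V [HU [HV [Ux [Vix HUV]]]]]].
  exists (fun z => U z /\ V (i z)). repeat split; auto.
  - apply open_inter; [exact HU | exact (proj2 (proj2 (proj2 (tax T))) V HV)].
  - intros z [Uz Viz]. auto.
Qed.

End TopologicalInverseSemigroup.

Section HomomorphicImage.
Variables (X : Type) (n : nat) (T : TIS) (g : SIS X n -> T).
Hypothesis g_mul : forall a b, g (SIS_mul a b) = tmul T (g a) (g b).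
Local Notation m := (tmul T).
Local Notation i := (tinv T).
Local Notation tt := (ttop T).
Local Notation TI := (TIS_inverse T).

Lemma g_inv s : g (SIS_inv s) = i (g s).
Proof.
  apply (inv_unique TI); rewrite <- !g_mul;
    [rewrite SIS_mul_inv_mul | rewrite SIS_inv_mul_inv]; reflexivity.
Qed.

Definition idem_image (z : T) : Prop := exists d, pid d /\ g d = z.

Lemma idem_image_idem z : idem_image z -> m z z = z.
Proof. intros [d [Hd <-]]. rewrite <- g_mul, pid_idem; auto. Qed.

Lemma idem_image_mul z z' : idem_image z -> idem_image z' -> idem_image (m z z').
Proof.
  intros [d [Hd <-]] [d' [Hd' <-]]. exists (SIS_mul d d').
  split; [apply pid_mul; assumption | apply g_mul].
Qed.

Lemma finite_sandwich d1 d2 : pid d1 -> pid d2 ->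
  exists l, forall s, In (g (SIS_mul (SIS_mul d1 s) d2)) l.
Proof.
  intros Hd1 Hd2. destruct (within_sandwich _ _ d1 d2 Hd1 Hd2) as [L HL].
  destruct (within_finite X n L) as [ls Hls].
  exists (map g ls). intros s. apply in_map, Hls, HL.
Qed.

Lemma idem_image_mul_finite e : idem_image e ->
  exists l, forall z, idem_image z -> In (m z e) l /\ In (m e z) l.
Proof.
  intros He. destruct He as [d [Hd Ed]].
  destruct (finite_sandwich d d Hd Hd) as [l Hl]. exists l. intros z Hz.
  assert (Hee : m e e = e) by (apply idem_image_idem; exists d; auto).
  assert (Hzz : m z z = z) by (apply idem_image_idem, Hz).
  destruct Hz as [u [_ <-]].
  assert (Hsand : m (m e (g u)) e = g (SIS_mul (SIS_mul d u) d))
    by (rewrite !g_mul, Ed; reflexivity).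
  split; [rewrite <- (idem_sandwich_l TI e _ Hee Hzz)
         | rewrite <- (idem_sandwich_r TI e _ Hee Hzz)];
    rewrite Hsand; apply Hl.
Qed.

Lemma adherent_idem_image_mul y e :
  adherent tt idem_image y -> idem_image e -> idem_image (m y e).
Proof.
  intros Hy He. destruct (idem_image_mul_finite e He) as [l Hl].
  apply (adherent_finite tt (TIS_hausdorff T) idem_image l).
  apply (adherent_image tt (fun z => m z e) idem_image); [| apply continuous_at_mulr | exact Hy].
  intros z Hz. split; [apply idem_image_mul | apply Hl]; assumption.
Qed.

Definition rank_image (r : nat) (z : T) : Prop :=
  exists d, pid d /\ rank_le (proj1_sig d) r /\ g d = z.

Lemma rank_image_lt k k' r : idem_image k -> rank_image r k' -> k <> k' -> m k k' = k ->
  exists r', r' < r /\ rank_image r' k.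
Proof.
  intros [d [Hd <-]] [d' [Hd' [Hr <-]]] Ne E.
  destruct (pid_mul_rank_lt X n d d' r Hd Hd') as [r' [Hr' Hrk]]; [|exact Hr|].
  - intros Edd'. apply Ne. rewrite <- E, <- g_mul, Edd'. reflexivity.
  - exists r'. split; [exact Hr'|]. exists (SIS_mul d d').
    split; [apply pid_mul; assumption|]. split; [exact Hrk|]. rewrite g_mul. exact E.
Qed.

Lemma adherent_idem_maximal y k :
  m y y = y -> adherent tt idem_image y -> idem_image k -> m k y = k ->
  (forall e, idem_image e -> m k (m y e) = k -> m y e = k) -> k = y.
Proof.
  intros Hyy Hy Hk Hky Hmax.
  destruct (idem_image_mul_finite k Hk) as [l Hl].
  destruct (hausdorff_isolate tt (TIS_hausdorff T) l k) as [U [HU [Uk HUl]]].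
  destruct (hausdorff_isolate tt (TIS_hausdorff T) [k] y) as [W [HW [Wy HWk]]].
  destruct (continuous_at_mull T k y U HU) as [O [HO [Oy HOU]]]; [rewrite Hky; exact Uk|].
  destruct (continuous_at_mull T y y (fun z => O z /\ W z)) as [O' [HO' [O'y HO'OW]]];
    [apply open_inter; assumption | rewrite Hyy; auto|].
  destruct (Hy O' HO' O'y) as [e [O'e He]].
  destruct (HO'OW e O'e) as [Oye Wye].
  assert (Hkye : m k (m y e) = k).
  { apply HUl; [apply Hl, adherent_idem_image_mul; assumption | exact (HOU _ Oye)]. }
  apply HWk; [left; reflexivity|]. rewrite <- (Hmax e He Hkye). exact Wye.
Qed.

Lemma adherent_idem_image y : m y y = y -> adherent tt idem_image y -> idem_image y.
Proof.
  intros Hyy Hy.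
  set (K := fun k => exists e, idem_image e /\ m y e = k).
  assert (HK : forall k, K k -> idem_image k).
  { intros k [e [He <-]]. apply adherent_idem_image_mul; assumption. }
  destruct (ex_maximal_of_rank_bound K (fun k k' => k <> k' /\ m k k' = k) rank_image n)
    as [k [[e0 [He0 Ek]] Hmax]].
  - destruct (Hy _ (open_full tt) I) as [e [_ He]]. exists (m y e), e. auto.
  - intros k [d [Hd Ed]]%HK. exists d.
    split; [exact Hd | split; [exact (proj2 (proj2_sig d)) | exact Ed]].
  - intros k k' r Hk _ [Ne E] Hr. exact (rank_image_lt k k' r (HK k Hk) Hr Ne E).
  - assert (Hky : m k y = k).
    { rewrite <- Ek, <- (mulA TI).
      rewrite (idem_comm TI e0 y (idem_image_idem _ He0) Hyy).
      rewrite (mulA TI), Hyy. reflexivity. }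
    rewrite <- (adherent_idem_maximal y k Hyy Hy (HK k (ex_intro _ e0 (conj He0 Ek))) Hky).
    + apply HK. exists e0. auto.
    + intros e He Hkye. apply NNPP. intros Ne.
      apply (Hmax (m y e)); [exists e; auto | split; auto].
Qed.

Lemma adherent_range x : adherent tt (fun z => exists s, g s = z) x -> exists s, g s = x.
Proof.
  intros Hx. set (B := fun z => exists s, g s = z) in *.
  assert (Hix : adherent tt B (i x)).
  { apply (adherent_image tt i B B); [| apply continuous_at_inv | exact Hx].
    intros z [s <-]. exists (SIS_inv s). apply g_inv. }
  assert (Hidem : forall w, adherent tt B w -> idem_image (m w (i w))).
  { intros w Hw. apply adherent_idem_image.
    - rewrite (mulA TI), (mul_inv_mul TI). reflexivity.
    - apply (adherent_image tt (fun z => m z (i z)) B); [| apply continuous_at_mul_inv | exact Hw].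
      intros z [s <-]. exists (SIS_mul s (SIS_inv s)).
      split; [apply pid_mul_inv | rewrite g_mul, g_inv; reflexivity]. }
  destruct (Hidem x Hx) as [d1 [Hd1 E1]].
  destruct (Hidem (i x) Hix) as [d2 [Hd2 E2]].
  rewrite (invK TI) in E2.
  destruct (finite_sandwich d1 d2 Hd1 Hd2) as [l Hl].
  set (sandwich := fun z => m (m (m x (i x)) z) (m (i x) x)).
  assert (Hx_fixed : sandwich x = x).
  { unfold sandwich. rewrite (mul_inv_mul TI), (mulA TI).
    apply (mul_inv_mul TI). }
  rewrite <- Hx_fixed.
  apply (adherent_finite tt (TIS_hausdorff T) B l).
  apply (adherent_image tt sandwich B); [| | exact Hx].
  - intros z [s <-]. unfold sandwich. rewrite <- E1, <- E2, <- !g_mul.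
    split; [eexists; reflexivity | apply Hl].
  - apply (continuous_at_comp tt (fun w => m w (m (i x) x)) (m (m x (i x))));
      [apply continuous_at_mull | apply continuous_at_mulr].
Qed.
End HomomorphicImage.

Theorem corollary2 (X : Type) (n : nat) (tau : topology (SIS X n)) :
  inhabited X -> 1 <= n ->
  hausdorff tau -> continuous2 tau (@SIS_mul X n) -> continuous tau tau (@SIS_inv X n) ->
  abs_H_closed (@SIS_mul X n) tau.
Proof.
  intros _ _ _ _ _ T h _ h_mul T' e [e_mul _].
  set (g := fun s => e (h s)).
  assert (g_mul : forall a b, g (SIS_mul a b) = tmul T' (g a) (g b)).
  { intros a b. unfold g. rewrite h_mul. apply e_mul; eexists; reflexivity. }
  apply closed_of_adherent. intros y Hy.
  destruct (adherent_range X n T' g g_mul y) as [s <-].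
  - intros U HU Uy. destruct (Hy U HU Uy) as [z [Uz [a [[s <-] <-]]]].
    exists (g s). split; [exact Uz | exists s; reflexivity].
  - exists (h s). split; [exists s|]; reflexivity.
Qed.
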